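(* In the transaction packaging game described in the context, define $\hat p:M\to\mathbb{R}$ by $$\hat p(\mathsf{tx})=\frac{1}{|M|}\left(k+\sum_{\mathsf{tx}'\in M}\frac{\ln v(\mathsf{tx})-\ln v(\mathsf{tx}')}{\lambda}\right).$$ If $0\le\hat p(\mathsf{tx})\le 1$ for all $\mathsf{tx}\in M$, then the corresponding strategy of $\hat p$ (a mixed strategy $\sigma$ with $p^\sigma(\mathsf{tx})=\hat p(\mathsf{tx})$ for all $\mathsf{tx}\in M$) is an equilibrium strategy. Moreover, for all $\mathsf{tx}\in M$, $$v(\mathsf{tx})\exp(-\lambda\hat p(\mathsf{tx}))=\exp\left(-\frac{\lambda k}{|M|}\right)\exp\left(\frac{1}{|M|}\sum_{\mathsf{tx}'\in M}\ln v(\mathsf{tx}')\right).$$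
   Context: Transaction packaging game. Fix a positive integer $k$ (block capacity), a real $\lambda>0$ (network latency parameter), a finite set $M$ (the mempool) of transactions with $|M|\ge k$, and a gas price function $v:M\to(0,\infty)$. Miners are indexed by $i\in[0,1]$. A pure strategy of a miner is a subset $D\subseteq M$ with $|D|=k$; let $\mathcal{S}$ be the set of such subsets. A mixed strategy is a probability distribution $\sigma$ on $\mathcal{S}$, and its marginal probability is $p^\sigma(\mathsf{tx})=\sum_{D\in\mathcal{S}}\sigma(D)\mathbf{1}[\mathsf{tx}\in D]$. A corresponding strategy of a function $p:M\to[0,1]$ is a mixed strategy $\sigma$ with $p^\sigma(\mathsf{tx})=p(\mathsf{tx})$ for all $\mathsf{tx}\in M$. Conditional on miner $i$ mining a block $B_i$ (drawn from her mixed strategy $\sigma_i$), the number $\gamma$ of other blocks mined is distributed as $\mathrm{Poisson}(\lambda)$; they are mined by miners chosen independently and uniformly at random from $[0,1]$, each such miner $j$ producing a block $B_j$ drawn independently from her mixed strategy $\sigma_j$. The utility of miner $i$ is $u_i(\sigma_i,\sigma_{-i})=\sum_{\mathsf{tx}\in M}p^{\sigma_i}(\mathsf{tx})\,v(\mathsf{tx})\,\Pr[\text{no other mined block }B_j\ (j\neq i)\text{ contains }\mathsf{tx}]$. A mixed strategy $\sigma^*$ is an equilibrium strategy if for every $i\in[0,1]$ and every mixed strategy $\sigma$, $u_i(\sigma,\sigma^*_{-i})\le u_i(\sigma^*,\sigma^*_{-i})$, where $\sigma^*_{-i}$ denotes the profile in which all miners other than $i$ use $\sigma^*$. *)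

From HB Require Import structures.
From mathcomp Require Import all_boot all_order all_algebra.
From mathcomp Require Import all_classical all_reals all_analysis.
Set Implicit Arguments. Unset Strict Implicit. Unset Printing Implicit Defensive.
Import Order.TTheory GRing.Theory Num.Theory.
Import numFieldTopology.Exports numFieldNormedType.Exports.
Local Open Scope ring_scope.

Section Game.
Variables (R : realType) (M : finType) (k : nat) (lam : R) (v : M -> R).

(* A mixed strategy: a probability distribution on the k-element subsets of M,
   encoded as a function on {set M} vanishing outside sets of size k. *)
Definition is_mixed (sigma : {ffun {set M} -> R}) : Prop :=
  (forall D : {set M}, 0 <= sigma D) /\
  (forall D : {set M}, #|D| != k -> sigma D = 0) /\
  \sum_(D : {set M}) sigma D = 1.

Definition marg (sigma : {ffun {set M} -> R}) (tx : M) : R :=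
  \sum_(D : {set M}) sigma D * (tx \in D)%:R.

Definition not_in_block (sigma : {ffun {set M} -> R}) (tx : M) : R :=
  \sum_(D : {set M}) sigma D * (tx \notin D)%:R.

(* Pr[no other mined block contains tx] when all other miners use sigma:
   gamma ~ Poisson(lam) other blocks, each drawn independently from sigma. *)
Definition no_other (sigma : {ffun {set M} -> R}) (tx : M) : R :=
  limn (series (fun n : nat => poisson_pmf lam n * not_in_block sigma tx ^+ n)).

Definition utility (sigma sigmastar : {ffun {set M} -> R}) : R :=
  \sum_(tx : M) marg sigma tx * v tx * no_other sigmastar tx.

(* equilibrium strategy (miners are symmetric, so the quantifier over the
   miner index i in [0,1] is vacuous) *)
Definition is_equilibrium (sigmastar : {ffun {set M} -> R}) : Prop :=
  is_mixed sigmastar /\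
  forall sigma, is_mixed sigma -> utility sigma sigmastar <= utility sigmastar sigmastar.

Definition corresponds (p : M -> R) (sigma : {ffun {set M} -> R}) : Prop :=
  is_mixed sigma /\ forall tx, marg sigma tx = p tx.

Definition phat (tx : M) : R :=
  #|M|%:R^-1 * (k%:R + \sum_(tx' : M) (ln (v tx) - ln (v tx')) / lam).

End Game.

(* First, if every other miner plays a strategy with
   marginals p, then with Poisson(lam) competing blocks a transaction tx is
   still unclaimed with probability exp(-lam p(tx)), so it is worth
   v(tx) exp(-lam p(tx)) to a miner.  The marginals phat are exactly those
   that make this worth the same constant C for every transaction (this is the
   displayed identity), hence every strategy, whose marginals always sum to k,
   earns k C: all strategies are best responses.  Second, a vector p with
   entries in [0,1] summing to k is always the marginal vector of a
   distribution on k-subsets: by pipage rounding, moving mass between two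
   fractional entries in either direction until one becomes integral writes p
   as a convex combination of two vectors with fewer fractional entries. *)
From HB Require Import structures.
From mathcomp Require Import all_boot all_order all_algebra.
From mathcomp Require Import all_classical all_reals all_analysis.
From mathcomp Require Import ring lra.
Set Implicit Arguments.
Unset Strict Implicit.
Import Order.TTheory GRing.Theory Num.Theory.
Import numFieldTopology.Exports numFieldNormedType.Exports.
Local Open Scope ring_scope.

Section Marginals.
Variables (R : realType) (M : finType) (k : nat).
Implicit Types (sigma tau : {ffun {set M} -> R}) (p q r : M -> R).

Lemma sum_indicator (D : {set M}) : \sum_x ((x \in D)%:R : R) = #|D|%:R.
Proof.
rewrite -sum1_card natr_sum [RHS]big_mkcond /=.
by apply: eq_bigr => x _; case: (x \in D).
Qed.

Lemma not_in_blockE sigma tx :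
  is_mixed k sigma -> not_in_block sigma tx = 1 - marg sigma tx.
Proof.
move=> [_ [_ sum1]]; rewrite /not_in_block /marg -[X in _ = X - _]sum1 -sumrB.
by apply: eq_bigr => D _; case: (tx \in D); rewrite /= ?mulr1 ?mulr0 ?subr0 ?subrr.
Qed.

Lemma sum_marg sigma : is_mixed k sigma -> \sum_tx marg sigma tx = k%:R.
Proof.
move=> [_ [supp sum1]]; rewrite /marg exchange_big /=.
transitivity (\sum_(D : {set M}) sigma D * k%:R); last by rewrite -mulr_suml sum1 mul1r.
apply: eq_bigr => D _; rewrite -mulr_sumr sum_indicator.
by have [/eqP ->|/supp ->] := boolP (#|D| == k); rewrite ?mul0r.
Qed.

Lemma corresponds_indicator p (D : {set M}) :
  (forall x, p x = (x \in D)%:R) -> #|D| = k ->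
  corresponds k p [ffun E => ((E == D)%:R : R)].
Proof.
move=> pD cardD; have pointD (f : {set M} -> R) :
    \sum_E [ffun E => ((E == D)%:R : R)] E * f E = f D.
  rewrite (bigD1 D) //= ffunE eqxx mul1r big1 ?addr0 // => E /negbTE ED.
  by rewrite ffunE ED mul0r.
split; last by move=> tx; rewrite /marg pointD pD.
split; first by move=> E; rewrite ffunE ler0n.
split; last by rewrite -[RHS](pointD (fun=> 1)); apply: eq_bigr => E _; rewrite mulr1.
by move=> E; rewrite ffunE; case: (eqVneq E D) => // ->; rewrite cardD eqxx.
Qed.

Lemma corresponds_convex (a b : R) p q r sigma tau :
  0 <= a -> 0 <= b -> a + b = 1 -> (forall x, r x = a * p x + b * q x) ->
  corresponds k p sigma -> corresponds k q tau ->
  corresponds k r [ffun D => a * sigma D + b * tau D].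
Proof.
move=> a0 b0 ab rE [[s0 [sk s1]] sp] [[t0 [tk t1]] tq]; split; last first.
  move=> tx; rewrite rE -sp -tq /marg !mulr_sumr -big_split /=.
  by apply: eq_bigr => D _; rewrite ffunE; ring.
split; first by move=> D; rewrite ffunE addr_ge0 // mulr_ge0.
split; first by move=> D HD; rewrite ffunE sk // tk // !mulr0 addr0.
by under eq_bigr do rewrite ffunE; rewrite big_split /= -!mulr_sumr s1 t1 !mulr1.
Qed.

Definition fractional p := [set x | 0 < p x < 1].

Lemma nonfractionalE p x :
  0 <= p x <= 1 -> x \notin fractional p -> p x = (p x == 1)%:R.
Proof.
rewrite inE negb_and -!leNgt => /andP[p0 p1] /orP[px0|px1].
  have -> : p x = 0 by apply/le_anti; rewrite px0 p0.
  by rewrite eq_sym oner_eq0.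
have -> : p x = 1 by apply/le_anti; rewrite px1 p1.
by rewrite eqxx.
Qed.

Lemma integral_corresponds p :
  (forall x, 0 <= p x <= 1) -> #|fractional p| = 0%N -> \sum_x p x = k%:R ->
  exists sigma, corresponds k p sigma.
Proof.
move=> p01 frac0 sum_p; set D := [set x | p x == 1].
have pD x : p x = (x \in D)%:R.
  by rewrite inE; apply: nonfractionalE; rewrite ?(card0_eq frac0).
exists [ffun E => ((E == D)%:R : R)]; apply: corresponds_indicator => //.
by apply/eqP; rewrite -(eqr_nat R) -sum_indicator -sum_p; under eq_bigr do rewrite -pD.
Qed.

Lemma card_fractional_neq1 p :
  (forall x, 0 <= p x <= 1) -> \sum_x p x = k%:R -> #|fractional p| != 1%N.
Proof.
move=> p01 sum_p; apply/cards1P => -[i frac_i].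
have : i \in fractional p by rewrite frac_i set11.
rewrite inE => /andP[pi0 pi1].
pose m := (\sum_(x | x != i) nat_of_bool (p x == 1%R))%N.
have sum_rest : \sum_(x | x != i) p x = m%:R.
  rewrite natr_sum; apply: eq_bigr => x xi; apply: nonfractionalE => //.
  by rewrite frac_i inE.
have pi_nat : p i = k%:R - m%:R by rewrite -sum_p (bigD1 i) //= sum_rest addrK.
have [km|mk] := leqP k m.
  have : (k%:R : R) <= m%:R by rewrite ler_nat.
  lra.
have : (m.+1%:R : R) <= k%:R by rewrite ler_nat.
by rewrite -natr1; lra.
Qed.

Definition pipage p (i j : M) (c : R) x := p x + c * ((x == i)%:R - (x == j)%:R).

Section Pipage.
Variables (p : M -> R) (i j : M).
Hypothesis ji : j != i.

Lemma pipageE c x :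
  pipage p i j c x = if x == i then p i + c else if x == j then p j - c else p x.
Proof.
have ij : (i == j) = false by rewrite eq_sym (negbTE ji).
rewrite /pipage; have [->|xi] := eqVneq x i; first by rewrite ij subr0 mulr1.
by case: (eqVneq x j) => [->|_]; rewrite /= ?sub0r ?mulrN1 ?oppr0 ?mulr0 ?addr0.
Qed.

Lemma sum_pipage c : \sum_x pipage p i j c x = \sum_x p x.
Proof.
have sum_delta (a : M) : \sum_x ((x == a)%:R : R) = 1.
  by rewrite (bigD1 a) //= eqxx big1 ?addr0 // => x /negbTE ->.
by rewrite big_split /= -mulr_sumr sumrB !sum_delta subrr mulr0 addr0.
Qed.

Lemma pipage_bounded c :
  (forall x, 0 <= p x <= 1) -> 0 <= p i + c <= 1 -> 0 <= p j - c <= 1 ->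
  forall x, 0 <= pipage p i j c x <= 1.
Proof. by move=> p01 ci cj x; rewrite pipageE; case: ifP => // _; case: ifP. Qed.

Lemma card_fractional_pipage c :
  i \in fractional p -> j \in fractional p -> (p i + c == 1) || (p j - c == 0) ->
  (#|fractional (pipage p i j c)| < #|fractional p|)%N.
Proof.
move=> frac_i frac_j endpoint; apply: proper_card; apply/properP; split.
  apply/fintype.subsetP => x; rewrite [x \in fractional _]inE pipageE.
  case: eqVneq => [-> _ //|_]; case: eqVneq => [-> _ //|_].
  by rewrite inE.
case/orP: endpoint => /eqP hit; [exists i | exists j] => //;
  by rewrite inE pipageE eqxx ?(negbTE ji) hit ltxx ?andbF.
Qed.

End Pipage.

Lemma pipage_endpoint p i j :
  i \in fractional p -> j \in fractional p ->
  exists2 c : R, 0 < c &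
    [/\ 0 <= p i + c <= 1, 0 <= p j - c <= 1 & (p i + c == 1) || (p j - c == 0)].
Proof.
rewrite !inE => /andP[pi0 pi1] /andP[pj0 pj1].
have [h|h] := leP (1 - p i) (p j); [exists (1 - p i) | exists (p j)]; try lra;
  (split; [apply/andP; split; lra | apply/andP; split; lra | apply/orP]);
  [left | right]; apply/eqP; ring.
Qed.

Lemma pipage_convex p i j (s t : R) x : 0 < s -> 0 < t ->
  p x = t / (s + t) * pipage p i j s x + s / (s + t) * pipage p j i t x.
Proof. by move=> s0 t0; rewrite /pipage; field; rewrite gt_eqF ?addr_gt0. Qed.

Lemma marginal_corresponds p :
  (forall x, 0 <= p x <= 1) -> \sum_x p x = k%:R ->
  exists sigma, corresponds k p sigma.
Proof.
move: {2}#|fractional p| (leqnn #|fractional p|) => n.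
elim: n p => [|n IH] p frac_n p01 sum_p.
  by apply: integral_corresponds => //; apply/eqP; rewrite -leqn0.
have [frac0|[i frac_i]] := set_0Vmem (fractional p).
  by apply: integral_corresponds; rewrite ?frac0 ?cards0.
have [frac1|[j]] := set_0Vmem (fractional p :\ i).
  by move: (card_fractional_neq1 p01 sum_p); rewrite (cardsD1 i) frac_i frac1 cards0.
rewrite in_setD1 => /andP[ji frac_j].
have ij : i != j by rewrite eq_sym.
have realize_pipage (a b : M) (c : R) : b != a -> a \in fractional p -> b \in fractional p ->
    [/\ 0 <= p a + c <= 1, 0 <= p b - c <= 1 & (p a + c == 1) || (p b - c == 0)] ->
    exists sigma, corresponds k (pipage p a b c) sigma.
  move=> ba frac_a frac_b [ca cb endpoint]; apply: IH.
  - by rewrite -ltnS (leq_trans (card_fractional_pipage ba frac_a frac_b endpoint)).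
  - exact: pipage_bounded.
  - by rewrite sum_pipage.
have [s s0 /(realize_pipage _ _ _ ji frac_i frac_j) [sigma sigma_s]] :=
  pipage_endpoint frac_i frac_j.
have [t t0 /(realize_pipage _ _ _ ij frac_j frac_i) [tau tau_t]] :=
  pipage_endpoint frac_j frac_i.
have st0 : 0 < s + t by rewrite addr_gt0.
exists [ffun D => t / (s + t) * sigma D + s / (s + t) * tau D].
apply: corresponds_convex sigma_s tau_t; rewrite ?divr_ge0 ?ltW //.
  by rewrite -mulrDl addrC divff // gt_eqF.
by move=> x; apply: pipage_convex.
Qed.

End Marginals.

Lemma poisson_generating_function (R : realType) (lam q : R) : 0 < lam ->
  limn (series (fun n => poisson_pmf lam n * q ^+ n)) = expR (- (lam * (1 - q))).
Proof.
move=> lam0.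
have -> : series (fun n => poisson_pmf lam n * q ^+ n) =
    series (exp_coeff (lam * q)) \* (fun=> expR (- lam)).
  apply/funext => n; rewrite /series /= mulr_suml; apply: eq_bigr => i _.
  by rewrite /poisson_pmf lam0 /exp_coeff /= exprMn; ring.
rewrite (cvg_lim _ (cvgM (is_cvg_series_exp_coeff (lam * q)) (cvg_cst _))) //.
by rewrite -expRD; congr expR; ring.
Qed.

Section Equilibrium.
Variables (R : realType) (M : finType) (k : nat) (lam : R) (v : M -> R).
Hypothesis lam_gt0 : 0 < lam.
Implicit Types (sigma tau : {ffun {set M} -> R}).

Lemma no_otherE sigma tx :
  is_mixed k sigma -> no_other lam sigma tx = expR (- (lam * marg sigma tx)).
Proof.
move=> mixed; rewrite /no_other poisson_generating_function // (not_in_blockE _ mixed).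
by rewrite subKr.
Qed.

Lemma indifferent_equilibrium sigma (C : R) :
  is_mixed k sigma -> (forall tx, v tx * expR (- (lam * marg sigma tx)) = C) ->
  is_equilibrium k lam v sigma.
Proof.
move=> mixed worth_C.
have utilityE tau : is_mixed k tau -> utility lam v tau sigma = k%:R * C.
  move=> mixed_tau; rewrite /utility -(sum_marg mixed_tau) mulr_suml.
  by apply: eq_bigr => tx _; rewrite -mulrA no_otherE // worth_C.
by split=> // tau mixed_tau; rewrite !utilityE.
Qed.

End Equilibrium.

Section Phat.
Variables (R : realType) (M : finType) (k : nat) (lam : R) (v : M -> R).
Hypotheses (lam_neq0 : lam != 0) (M_gt0 : (0 < #|M|)%N).

Let N : R := #|M|%:R.
Let N_neq0 : N != 0. Proof. by rewrite pnatr_eq0 -lt0n. Qed.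
Let sum_constE (x : R) : \sum_(tx : M) x = x * N.
Proof. by rewrite sumr_const mulr_natr. Qed.

Lemma sum_phat : \sum_tx phat k lam v tx = k%:R.
Proof.
have antisym : \sum_(tx : M) \sum_(tx' : M) (ln (v tx) - ln (v tx')) / lam = 0.
  under eq_bigr do rewrite -mulr_suml sumrB.
  by rewrite -mulr_suml sumrB exchange_big subrr mul0r.
rewrite /phat -mulr_sumr big_split /= antisym addr0 sum_constE.
by rewrite -/N mulrC mulfK.
Qed.

Lemma lam_phatE tx : lam * phat k lam v tx =
  lam * k%:R / N + (ln (v tx) - N^-1 * \sum_(tx' : M) ln (v tx')).
Proof.
rewrite /phat -mulr_suml sumrB sum_constE.
by field; rewrite lam_neq0 N_neq0.
Qed.

Lemma phat_balance tx : 0 < v tx ->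
  v tx * expR (- (lam * phat k lam v tx)) =
  expR (- (lam * k%:R / N)) * expR (N^-1 * \sum_(tx' : M) ln (v tx')).
Proof.
move=> v_gt0; rewrite lam_phatE !opprD !expRD opprK (expRN (ln _)) lnK ?posrE //.
by field; rewrite gt_eqF.
Qed.

End Phat.

Theorem lemma3p3 (R : realType) (M : finType) (k : nat) (lam : R) (v : M -> R) :
  (0 < k)%N -> (k <= #|M|)%N -> 0 < lam -> (forall tx, 0 < v tx) ->
  (forall tx, 0 <= phat k lam v tx <= 1) ->
  ((exists sigma, corresponds k (phat k lam v) sigma) /\
   (forall sigma, corresponds k (phat k lam v) sigma -> is_equilibrium k lam v sigma)) /\
  (forall tx, v tx * expR (- (lam * phat k lam v tx)) =
     expR (- (lam * k%:R / #|M|%:R)) *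
     expR (#|M|%:R^-1 * \sum_(tx' : M) ln (v tx'))).
Proof.
move=> k_gt0 kM lam_gt0 v_gt0 phat01.
have M_gt0 : (0 < #|M|)%N := leq_trans k_gt0 kM.
have lam_neq0 : lam != 0 by rewrite gt_eqF.
have balance tx := phat_balance k lam_neq0 M_gt0 (v_gt0 tx).
split; last exact: balance.
split; first exact: marginal_corresponds phat01 (sum_phat k lam v M_gt0).
move=> sigma [mixed marg_phat].
by apply: (indifferent_equilibrium lam_gt0 mixed) => tx; rewrite marg_phat balance.
Qed.
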